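(* Suppose each $f_i:\mathbb{R}^d\to\mathbb{R}$ is $\mu$-strongly convex and differentiable, with $\mu>0$ and $\lambda>0$. Set $h(x)=\lambda\psi(x)+\frac{\mu}{2n}\|x\|^2$ and $\phi(x)=f(x)-\frac{\mu}{2n}\|x\|^2$ on $\mathbb{R}^{nd}$, and let $L_h=\frac{\lambda+\mu}{n}$ be the smoothness constant of $h$. Then the proximal gradient iteration $$x^{k+1}=\mathrm{prox}_{\frac1{L_h}\phi}\Big(x^k-\tfrac1{L_h}\nabla h(x^k)\Big)$$ satisfies, for every $i$, $$x_i^{k+1}=\mathrm{prox}_{\frac1\lambda f_i}(\bar x^k)=\arg\min_{z\in\mathbb{R}^d}\Big\{f_i(z)+\tfrac\lambda2\|z-\bar x^k\|^2\Big\}.$$ Moreover, this iteration reaches an $\varepsilon$-suboptimal point of $F=h+\phi$ within $\mathcal{O}\big(\frac{\lambda}{\mu}\log\frac1\varepsilon\big)$ iterations.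
   Context: For $x=[x_1,\dots,x_n]\in\mathbb{R}^{nd}$ with $x_i\in\mathbb{R}^d$, define $$f(x)=\frac1n\sum_{i=1}^n f_i(x_i),\qquad \psi(x)=\frac1{2n}\sum_{i=1}^n\|x_i-\bar x\|^2,\qquad \bar x=\frac1n\sum_i x_i,\qquad F=f+\lambda\psi .$$ The proximal operator is $\mathrm{prox}_{\gamma\phi}(v)=\arg\min_x\{\phi(x)+\frac1{2\gamma}\|x-v\|^2\}$. *)

From HB Require Import structures.
From mathcomp Require Import all_boot all_order all_algebra.
From mathcomp Require Import all_classical all_reals all_analysis.
Set Implicit Arguments. Unset Strict Implicit. Unset Printing Implicit Defensive.
Import Order.TTheory GRing.Theory Num.Theory.
Import numFieldNormedType.Exports.
Local Open Scope classical_set_scope.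
Local Open Scope ring_scope.

Section Defs.
Variable R : realType.

(* Euclidean inner product and squared Euclidean norm on matrices
   (a point of R^d is a row vector 'rV_d = 'M_(1,d); a point
   x = [x_1,...,x_n] of R^{nd} is an n x d matrix whose i-th row is x_i). *)
Definition mxinner (m k : nat) (A B : 'M[R]_(m, k)) : R :=
  \sum_(i < m) \sum_(j < k) A i j * B i j.
Definition sqnorm (m k : nat) (A : 'M[R]_(m, k)) : R := mxinner A A.

(* prox_{gamma phi}(v) = argmin_x { phi x + 1/(2 gamma) ||x - v||^2 }
   (selected with a choice operator; the argmin is a singleton in all
   uses below since the objective is strongly convex). *)
Definition prox (m k : nat) (gamma : R) (phi : 'M[R]_(m, k) -> R)
  (v : 'M[R]_(m, k)) : 'M[R]_(m, k) :=
  xget v [set x | forall y, phi x + (2 * gamma)^-1 * sqnorm (x - v)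
                          <= phi y + (2 * gamma)^-1 * sqnorm (y - v)].

Definition strongly_convex (m k : nat) (mu : R) (g : 'M[R]_(m, k) -> R) :=
  forall (x y : 'M[R]_(m, k)) (t : R), 0 <= t <= 1 ->
    g (t *: x + (1 - t) *: y)
      <= t * g x + (1 - t) * g y - mu / 2 * t * (1 - t) * sqnorm (x - y).

Definition is_gradient (m k : nat) (H : 'M[R]_(m, k) -> R^o)
    (x g : 'M[R]_(m, k)) :=
  differentiable H x /\ forall v, 'd H x v = mxinner g v.

Variables (n d : nat).

Definition xbar (x : 'M[R]_(n, d)) : 'rV[R]_d :=
  n%:R^-1 *: \sum_(i < n) row i x.

Definition fsum (fi : 'I_n -> 'rV[R]_d -> R) (x : 'M[R]_(n, d)) : R :=
  n%:R^-1 * \sum_(i < n) fi i (row i x).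

Definition psi (x : 'M[R]_(n, d)) : R :=
  (2 * n%:R)^-1 * \sum_(i < n) sqnorm (row i x - xbar x).

Definition Fobj (fi : 'I_n -> 'rV[R]_d -> R) (lam : R) (x : 'M[R]_(n, d)) : R :=
  fsum fi x + lam * psi x.

Definition hfun (mu lam : R) (x : 'M[R]_(n, d)) : R :=
  lam * psi x + mu / (2 * n%:R) * sqnorm x.

Definition phifun (fi : 'I_n -> 'rV[R]_d -> R) (mu : R) (x : 'M[R]_(n, d)) : R :=
  fsum fi x - mu / (2 * n%:R) * sqnorm x.

Definition Lh (mu lam : R) : R := (lam + mu) / n%:R.

Fixpoint pg_iter (fi : 'I_n -> 'rV[R]_d -> R) (mu lam : R)
    (gradh : 'M[R]_(n, d) -> 'M[R]_(n, d)) (x0 : 'M[R]_(n, d)) (k : nat)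
    : 'M[R]_(n, d) :=
  match k with
  | 0 => x0
  | k'.+1 =>
      let xk := pg_iter fi mu lam gradh x0 k' in
      prox (Lh mu lam)^-1 (phifun fi mu) (xk - (Lh mu lam)^-1 *: gradh xk)
  end.

Definition standing_assumptions (fi : 'I_n -> 'rV[R]_d -> R) (mu lam : R)
    (gradh : 'M[R]_(n, d) -> 'M[R]_(n, d)) : Prop :=
  [/\ (0 < n)%N, 0 < mu, 0 < lam,
      (forall i, strongly_convex mu (fi i)) &
      (forall i z, differentiable (fi i : 'rV[R]_d -> R^o) z)]
  /\ (forall x, is_gradient (hfun mu lam : _ -> R^o) x (gradh x)).

End Defs.

From HB Require Import structures.
From mathcomp Require Import all_boot all_order all_algebra.
From mathcomp Require Import all_classical all_reals all_analysis.
From mathcomp Require Import ring lra.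
Set Implicit Arguments. Unset Strict Implicit. Unset Printing Implicit Defensive.
Import Order.TTheory GRing.Theory Num.Theory.
Import numFieldNormedType.Exports.
Local Open Scope classical_set_scope.
Local Open Scope ring_scope.

(* 1. h is an exact quadratic: h(x + w) = h(x) + <grad_h x, w> + h(w), with
      grad_h x = (lam/n) dev x + (mu/n) x, where dev x collects the deviations
      x_i - xbar.  Hence the gradient step sends every agent to the shrunk
      average (lam/(lam+mu)) xbar, and the proximal objective of phi at that
      point separates over agents into  f_i(z_i) + lam/2 |z_i - xbar|^2 :
      the new iterate is obtained agent by agent as prox_{f_i/lam}(xbar).

   2. For a quadratic H with (muF/2)|w|^2 <= H(w) <= (L/2)|w|^2 and
      phi + H muF-strongly convex, one proximal gradient step with step 1/L
      contracts the optimality gap by 1 - muF/L.  Here muF = mu/n and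
      L = L_h = (lam+mu)/n, giving the rate 1 - mu/(lam+mu), whence the
      O((1 + lam/mu) log(1/eps)) iteration bound. *)

Section InnerProduct.
Variables (R : realType) (m k : nat).
Implicit Types (A B C : 'M[R]_(m, k)) (a t : R).

Lemma mxinnerC A B : mxinner A B = mxinner B A.
Proof. by apply: eq_bigr => i _; apply: eq_bigr => j _; rewrite mulrC. Qed.

Lemma mxinnerDl A B C : mxinner (A + B) C = mxinner A C + mxinner B C.
Proof.
rewrite /mxinner -big_split; apply: eq_bigr => i _.
by rewrite -big_split; apply: eq_bigr => j _; rewrite mxE mulrDl.
Qed.

Lemma mxinnerZl a A B : mxinner (a *: A) B = a * mxinner A B.
Proof.
rewrite /mxinner mulr_sumr; apply: eq_bigr => i _.
by rewrite mulr_sumr; apply: eq_bigr => j _; rewrite mxE mulrA.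
Qed.

Lemma mxinnerNl A B : mxinner (- A) B = - mxinner A B.
Proof. by rewrite -scaleN1r mxinnerZl mulN1r. Qed.

Lemma mxinnerBl A B C : mxinner (A - B) C = mxinner A C - mxinner B C.
Proof. by rewrite mxinnerDl mxinnerNl. Qed.

Lemma mxinnerZr a A B : mxinner B (a *: A) = a * mxinner B A.
Proof. by rewrite mxinnerC mxinnerZl mxinnerC. Qed.

Lemma mxinnerBr A B C : mxinner C (A - B) = mxinner C A - mxinner C B.
Proof. by rewrite mxinnerC mxinnerBl !(mxinnerC C). Qed.

Lemma mxinner0l A : mxinner 0 A = 0.
Proof. by rewrite -(scale0r (0 : 'M[R]_(m, k))) mxinnerZl mul0r. Qed.

Lemma mxinner_suml (I : finType) (F : I -> 'M[R]_(m, k)) B :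
  mxinner (\sum_i F i) B = \sum_i mxinner (F i) B.
Proof.
elim/big_rec2: _ => [|i x y _ <-]; first exact: mxinner0l.
by rewrite mxinnerDl.
Qed.

Lemma mxinner_rows A B : mxinner A B = \sum_i mxinner (row i A) (row i B).
Proof.
rewrite /mxinner; apply: eq_bigr => i _; rewrite big_ord1.
by apply: eq_bigr => j _; rewrite !mxE.
Qed.

Lemma sqnorm_rows A : sqnorm A = \sum_i sqnorm (row i A).
Proof. exact: mxinner_rows. Qed.

Lemma sqnorm_ge0 A : 0 <= sqnorm A.
Proof. by do 2!apply: sumr_ge0 => ? _; rewrite -expr2 sqr_ge0. Qed.

Lemma sqnorm_eq0 A : sqnorm A = 0 -> A = 0.
Proof.
have sq_ge0 (x : R) : 0 <= x * x by rewrite -expr2 sqr_ge0.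
move=> /psumr_eq0P rows0; apply/matrixP => i j; rewrite mxE.
have /psumr_eq0P entries0 := rows0 (fun i _ => sumr_ge0 _ (fun j _ => sq_ge0 _)) i isT.
by apply/eqP; rewrite -[_ == 0]orbb -mulf_eq0 entries0.
Qed.

Lemma sqnormD A B : sqnorm (A + B) = sqnorm A + 2 * mxinner A B + sqnorm B.
Proof.
rewrite /sqnorm mxinnerDl ![mxinner _ (A + B)]mxinnerC !mxinnerDl (mxinnerC B A).
ring.
Qed.

Lemma sqnormB A B : sqnorm (A - B) = sqnorm A - 2 * mxinner A B + sqnorm B.
Proof.
by rewrite sqnormD /sqnorm -scaleN1r !mxinnerZr mxinnerZl; ring.
Qed.

Lemma sqnormZ a A : sqnorm (a *: A) = a ^+ 2 * sqnorm A.
Proof. by rewrite /sqnorm mxinnerZl mxinnerZr mulrA expr2. Qed.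

Lemma sqnorm_convex t A B :
  sqnorm (t *: A + (1 - t) *: B)
  = t * sqnorm A + (1 - t) * sqnorm B - t * (1 - t) * sqnorm (A - B).
Proof.
have -> : t *: A + (1 - t) *: B = B + t *: (A - B).
  by apply/matrixP => i j; rewrite !mxE; ring.
have -> : sqnorm A = sqnorm (B + (A - B)) by rewrite addrC subrK.
by move: (A - B) => C; rewrite !sqnormD sqnormZ mxinnerZr; ring.
Qed.

(* The (max-entry) norm of the normed-space structure on matrices is dominated
   by the Euclidean norm. *)
Lemma mx_norm_sq_le A : `|A| ^+ 2 <= sqnorm A.
Proof.
have [->|] := eqVneq `|A| 0; first by rewrite expr0n sqnorm_ge0.
have -> : `|A| = mx_norm A by [].
move=> /mx_norm_neq0 [[i j] ->] /=.
rewrite real_normK ?num_real // /sqnorm /mxinner (bigD1 i) //= (bigD1 j) //=.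
rewrite -expr2 -addrA lerDl addr_ge0 ?sumr_ge0 // => [l _|l _].
  by rewrite -expr2 sqr_ge0.
by apply: sumr_ge0 => ? _; rewrite -expr2 sqr_ge0.
Qed.

End InnerProduct.

Definition minimizes (R : numDomainType) (T : Type) (g : T -> R) (x : T) :=
  forall y, g x <= g y.

Section StronglyConvexMinimum.
Variable R : realType.

Lemma strongly_convex_ray m k (mu s : R) (g : 'M[R]_(m, k) -> R) (y : 'M[R]_(m, k)) :
  strongly_convex mu g -> 0 <= s <= 1 ->
  g (s *: y) + mu / 2 * s * (1 - s) * sqnorm y <= s * g y + (1 - s) * g 0.
Proof. by move=> sc /(sc y 0); rewrite scaler0 addr0 subr0; lra. Qed.

(* Continuity at 0 bounds g below near 0, and
   strong convexity along rays turns this into quadratic growth. *)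
Lemma strongly_convex_coercive k (mu : R) (g : 'rV[R]_k -> R) :
  0 < mu -> continuous g -> strongly_convex mu g ->
  exists2 r, 0 < r & forall y, r < `|y| -> g 0 < g y.
Proof.
move=> mu0 cg scg.
have /nbhs_norm0P [/= del del0 near0] :
    \forall y \near (0 : 'rV[R]_k), g 0 - 1 < g y.
  by apply: (cvgr_gt (g 0) (cg 0)); rewrite ltrBlDr ltrDl.
set rho := del / 2; have rho0 : 0 < rho by rewrite divr_gt0.
exists (del + 4 / (mu * rho)); first by rewrite addr_gt0 // divr_gt0 // mulr_gt0.
move=> y ry; set N := `|y|.
have delN : del < N by apply: lt_trans ry; rewrite ltrDl divr_gt0 // mulr_gt0.
have N0 : 0 < N by apply: lt_trans delN.
have muN : 4 <= mu * rho * N.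
  have : 4 / (mu * rho) < N by apply: lt_trans ry; rewrite ltrDr.
  by rewrite ltr_pdivrMr ?mulr_gt0 // mulrC => /ltW.
set s := rho / N; have s0 : 0 < s by rewrite divr_gt0.
have sN : s * N = rho by rewrite /s divfK // gt_eqF.
have s_half : s <= 1 / 2 by rewrite /s ler_pdivrMr // /rho; lra.
have near_sy : g 0 - 1 < g (s *: y).
  apply: near0 => /=; rewrite normrZ gtr0_norm // sN /rho.
  by rewrite ltr_pdivrMr // ltr_pMr // ltr1n.
have s01 : 0 <= s <= 1 by rewrite (ltW s0) /=; lra.
have ray := strongly_convex_ray y scg s01.
have growth : 1 <= mu / 2 * s * (1 - s) * sqnorm y.
  have sqN := mx_norm_sq_le y; rewrite -/N in sqN.
  have mus : mu * s * N ^+ 2 = mu * rho * N by rewrite -sN expr2; ring.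
  have c0 : 0 <= mu / 2 * s * (1 - s).
    have h1s : 0 <= 1 - s by lra.
    by apply: mulr_ge0 => //; apply: mulr_ge0; rewrite ?divr_ge0 // ltW.
  have := ler_wpM2l c0 sqN.
  have -> : mu / 2 * s * (1 - s) * N ^+ 2 = (1 - s) / 2 * (mu * s * N ^+ 2) by ring.
  rewrite mus; nra.
have : s * g 0 < s * g y by nra.
by rewrite ltr_pM2l.
Qed.

(* Existence of a minimizer: minimize over a closed ball (compact) with the
   extreme value theorem; outside the ball g is larger than g 0. *)
Lemma strongly_convex_has_min k (mu : R) (g : 'rV[R]_k -> R) :
  0 < mu -> continuous g -> strongly_convex mu g -> exists w, minimizes g w.
Proof.
move=> mu0 cg scg; have [r r0 outside] := strongly_convex_coercive mu0 cg scg.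
set B := [set y : 'rV[R]_k | `|y| <= r].
have ballB : closed_ball 0 r = B.
  by rewrite closed_ballE //; apply/funext => y; rewrite /closed_ball_ /= sub0r normrN.
have B0 : B 0 by rewrite /B /= normr0 ltW.
have cB : compact B.
  rewrite -ballB; apply: bounded_closed_compact; last exact: closed_ball_closed.
  rewrite ballB /= /bounded_near; near=> M => y /= yr; apply: le_trans yr _.
  by near: M; apply: nbhs_pinfty_ge; exact: num_real.
have [w _ wmin] := compact_EVT_min (ex_intro _ 0 B0) cB (continuous_subspaceT cg).
exists w => y; have w0 : g w <= g 0 by apply: wmin; rewrite inE.
have [yr|yr] := leP `|y| r; last exact/(le_trans w0)/ltW/outside.
by apply: wmin; rewrite inE.
Unshelve. all: by end_near.
Qed.

(* A strongly convex function has at most one minimizer: the midpoint of two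
   minimizers would be strictly better. *)
Lemma strongly_convex_min_unique m k (mu : R) (g : 'M[R]_(m, k) -> R) w w' :
  0 < mu -> strongly_convex mu g -> minimizes g w -> minimizes g w' -> w' = w.
Proof.
move=> mu0 sc minw minw'.
have := sc w w' (1 / 2); rewrite (_ : (0 <= 1 / 2 <= 1) = true); last by lra.
move=> /(_ isT) mid.
have := minw (1 / 2 *: w + (1 - 1 / 2) *: w'); have := minw' w.
have := sqnorm_ge0 (w - w') => ge0 h1 h2.
have /eqP : sqnorm (w - w') = 0 by apply/eqP; rewrite eq_le ge0 andbT; nra.
by move=> /eqP /sqnorm_eq0 /eqP; rewrite subr_eq0 => /eqP.
Qed.

End StronglyConvexMinimum.

Section ProximalOperator.
Variables (R : realType) (m k : nat).
Implicit Types (phi : 'M[R]_(m, k) -> R) (v w : 'M[R]_(m, k)).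

Definition proxobj (gamma : R) phi v w : R := phi w + (2 * gamma)^-1 * sqnorm (w - v).

Lemma prox_minimizes gamma phi v :
  (exists w, minimizes (proxobj gamma phi v) w) ->
  minimizes (proxobj gamma phi v) (prox gamma phi v).
Proof. exact: xgetPex. Qed.

Lemma proxobj_strongly_convex mu gamma phi v :
  0 < gamma -> strongly_convex mu phi -> strongly_convex mu (proxobj gamma phi v).
Proof.
move=> gamma0 sc x y t t01; rewrite /proxobj.
have -> : t *: x + (1 - t) *: y - v = t *: (x - v) + (1 - t) *: (y - v).
  by apply/matrixP => i j; rewrite !mxE; ring.
rewrite sqnorm_convex.
have -> : x - v - (y - v) = x - y by apply/matrixP => i j; rewrite !mxE; ring.
have := sc x y t t01.
have c0 : 0 <= (2 * gamma)^-1 by rewrite invr_ge0 mulr_ge0 // ltW.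
have : 0 <= t * (1 - t) * sqnorm (x - y).
  by case/andP: t01 => t0 t1; rewrite !mulr_ge0 ?sqnorm_ge0 ?subr_ge0.
set c := (2 * gamma)^-1 in c0 *; nra.
Qed.

Lemma prox_eq mu gamma phi v w :
  0 < mu -> 0 < gamma -> strongly_convex mu phi ->
  minimizes (proxobj gamma phi v) w -> prox gamma phi v = w.
Proof.
move=> mu0 gamma0 sc minw.
apply: (strongly_convex_min_unique mu0 (proxobj_strongly_convex v gamma0 sc) minw).
by apply: prox_minimizes; exists w.
Qed.

Lemma sqnorm_continuous : continuous (@sqnorm R m k).
Proof.
apply: continuous_big => [|i _]; first exact: add_continuous.
apply: continuous_big => [|j _]; first exact: add_continuous.
by move=> A; apply: continuousM; exact: coord_continuous.
Qed.

Lemma proxobj_continuous gamma phi v :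
  continuous phi -> continuous (proxobj gamma phi v).
Proof.
move=> cphi w.
have -> : proxobj gamma phi v = (phi : _ -> R^o)
    + (fun=> (2 * gamma)^-1) \* (fun w => sqnorm (w - v)) by [].
apply: continuousD; first exact: cphi.
apply: continuousM; first exact: cst_continuous.
apply: (@continuous_comp _ _ _ (fun w => w - v) (@sqnorm R m k)).
  by apply: continuousB => //; exact: cst_continuous.
exact: sqnorm_continuous.
Qed.

End ProximalOperator.

Lemma prox_minimizes_rV (R : realType) k (mu gamma : R) (phi : 'rV[R]_k -> R) v :
  0 < mu -> 0 < gamma -> continuous phi -> strongly_convex mu phi ->
  minimizes (proxobj gamma phi v) (prox gamma phi v).
Proof.
move=> mu0 gamma0 cphi sc; apply: prox_minimizes.
apply: (strongly_convex_has_min mu0); first exact: proxobj_continuous.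
exact: proxobj_strongly_convex.
Qed.

Section SeparableMinimization.
Variables (R : realType) (n d : nat) (G : 'I_n -> 'rV[R]_d -> R).

Definition rowsum (z : 'M[R]_(n, d)) : R := \sum_i G i (row i z).

Lemma rowsum_min_rows z : minimizes rowsum z -> forall i, minimizes (G i) (row i z).
Proof.
move=> zmin i u; pose y : 'M[R]_(n, d) := \matrix_j (if j == i then u else row j z).
have := zmin y; rewrite /rowsum (bigD1 i) //= [X in _ <= X](bigD1 i) //= rowK eqxx.
under [X in _ <= _ + X]eq_bigr => j /negbTE ji do rewrite rowK ji.
by rewrite lerD2r.
Qed.

Lemma rows_min_rowsum (w : 'I_n -> 'rV[R]_d) :
  (forall i, minimizes (G i) (w i)) -> minimizes rowsum (\matrix_i w i).
Proof. by move=> wmin y; apply: ler_sum => i _; rewrite rowK wmin. Qed.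

End SeparableMinimization.

Lemma xbar_is_linear (R : realType) n d : linear (@xbar R n d).
Proof.
move=> a x y; rewrite /xbar.
under eq_bigr do rewrite linearP.
rewrite big_split -scaler_sumr /=.
by rewrite scalerDr !scalerA mulrC.
Qed.

HB.instance Definition _ (R : realType) n d :=
  GRing.isLinear.Build R _ _ _ (@xbar R n d) (@xbar_is_linear R n d).

Definition dev (R : realType) n d (x : 'M[R]_(n, d)) : 'M[R]_(n, d) :=
  \matrix_i (row i x - xbar x).

Lemma row_dev (R : realType) n d (x : 'M[R]_(n, d)) i :
  row i (dev x) = row i x - xbar x.
Proof. exact: rowK. Qed.

Lemma dev_is_linear (R : realType) n d : linear (@dev R n d).
Proof.
move=> a x y; apply/row_matrixP => i.
rewrite [in RHS]linearP /= !row_dev !linearP /=.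
by rewrite scalerBr scalerN addrACA.
Qed.

HB.instance Definition _ (R : realType) n d :=
  GRing.isLinear.Build R _ _ _ (@dev R n d) (@dev_is_linear R n d).

Section Consensus.
Variables (R : realType) (n d : nat).
Hypothesis n_gt0 : (0 < n)%N.
Implicit Types x w : 'M[R]_(n, d).

Let n_neq0 : n%:R != 0 :> R. Proof. by rewrite pnatr_eq0 -lt0n. Qed.

Lemma sum_row_dev x : \sum_i row i (dev x) = 0.
Proof.
under eq_bigr do rewrite row_dev.
by rewrite sumrB sumr_const card_ord /xbar -scaler_nat scalerA mulfV ?scale1r ?subrr.
Qed.

(* Deviations are orthogonal to consensus matrices (those with equal rows),
   so only the deviation part of w is seen by dev x. *)
Lemma dev_orth x w : mxinner (dev x) (dev w) = mxinner (dev x) w.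
Proof.
apply/eqP; rewrite -subr_eq0 -mxinnerBr mxinner_rows.
under eq_bigr => i _ do rewrite linearB /= (row_dev w) addrAC subrr add0r.
by rewrite -mxinner_suml sum_row_dev mxinner0l.
Qed.

Lemma psiE x : psi x = (2 * n%:R)^-1 * sqnorm (dev x).
Proof. by rewrite /psi sqnorm_rows; under [in RHS]eq_bigr do rewrite row_dev. Qed.

Lemma psiD x w : psi (x + w) = psi x + n%:R^-1 * mxinner (dev x) w + psi w.
Proof. by rewrite !psiE linearD sqnormD dev_orth; field.
Qed.

Lemma psiZ a x : psi (a *: x) = a ^+ 2 * psi x.
Proof. by rewrite !psiE linearZ sqnormZ /=; ring. Qed.

Lemma psi_ge0 x : 0 <= psi x.
Proof. by rewrite psiE mulr_ge0 ?sqnorm_ge0 // invr_ge0 mulr_ge0 ?ler0n. Qed.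

(* Removing the consensus part decreases the Euclidean norm. *)
Lemma psi_le x : psi x <= (2 * n%:R)^-1 * sqnorm x.
Proof.
rewrite psiE ler_wpM2l ?invr_ge0 ?mulr_ge0 ?ler0n //.
have -> : sqnorm x = sqnorm (dev x + (x - dev x)) by rewrite addrC subrK.
rewrite sqnormD mxinnerBr -dev_orth subrr mulr0 addr0 lerDl.
exact: sqnorm_ge0.
Qed.

Lemma psi_convex t x w :
  psi (t *: x + (1 - t) *: w)
  = t * psi x + (1 - t) * psi w - t * (1 - t) * psi (x - w).
Proof.
rewrite !psiE linearB [in LHS]linearD [in LHS]linearZ [in LHS]linearZ /=.
by rewrite sqnorm_convex; ring.
Qed.

End Consensus.

Section QuadraticProxGradient.
Variables (R : realType) (m k : nat).
Variables (H : 'M[R]_(m, k) -> R) (G : 'M[R]_(m, k) -> 'M[R]_(m, k)).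

(* H is a quadratic function whose gradient map is G: its second-order Taylor
   expansion is exact and its quadratic part is H itself. *)
Hypothesis H_expand : forall x w, H (x + w) = H x + mxinner (G x) w + H w.
Hypothesis H_scale : forall a w, H (a *: w) = a ^+ 2 * H w.

(* The gradient of such an H is G: the directional derivative of H at x along
   v is the limit of  <G x, v> + h H(v)  as h -> 0. *)
Lemma quadratic_gradient x g : is_gradient (H : _ -> R^o) x g -> g = G x.
Proof.
move=> [dH dHE].
suff orth : forall v, mxinner (g - G x) v = 0.
  by apply/eqP; rewrite -subr_eq0; apply/eqP/sqnorm_eq0/orth.
move=> v; apply/eqP; rewrite mxinnerBl subr_eq0 -dHE -deriveE //; apply/eqP.
apply: cvg_lim => //.
set c := mxinner (G x) v; set b := H v.
have quotE : {near 0^', (fun h : R => c + h * b) =1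
    (fun h : R => h^-1 *: ((H \o shift x) (h *: v) - H x))}.
  near=> h; have h0 : h != 0 by near: h; exact: nbhs_dnbhs_neq.
  rewrite /= /shift (addrC (h *: v) x) H_expand H_scale mxinnerZr -/c -/b.
  change (c + h * b = h^-1 * (H x + h * c + h ^+ 2 * b - H x)); by field.
apply: cvg_trans (near_eq_cvg quotE) _.
apply: (@cvg_trans _ ((fun h : R => c + h * b) @ (0 : R))).
  exact: cvg_app (@nbhs_dnbhs _ 0).
suff : (fun h : R => c + h * b) @ (0 : R) --> c + 0 * b by rewrite mul0r addr0.
by apply: cvgD; [exact: cvg_cst | apply: cvgM; [exact: cvg_id | exact: cvg_cst]].
Unshelve. all: by end_near.
Qed.

Variables (phi : 'M[R]_(m, k) -> R) (muF L : R).
Hypothesis L_gt0 : 0 < L.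
Hypothesis muF_range : 0 <= muF <= L.
Hypothesis H_lower : forall w, muF / 2 * sqnorm w <= H w.
Hypothesis H_upper : forall w, H w <= L / 2 * sqnorm w.
Hypothesis F_sc : strongly_convex muF (fun z => phi z + H z).

(* Up to constants in z, the proximal objective is F minus the linear model. *)
Lemma proxobj_model x z :
  proxobj L^-1 phi (x - L^-1 *: G x) z
  = phi z + H z - H (z - x) + L / 2 * sqnorm (z - x)
    - H x + L / 2 * L^-2 * sqnorm (G x).
Proof.
rewrite /proxobj.
have -> : z - (x - L^-1 *: G x) = (z - x) + L^-1 *: G x.
  by move: (L^-1 *: G x) => y; apply/matrixP => i j; rewrite !mxE; ring.
have -> : H z = H (x + (z - x)) by rewrite [x + _]addrC subrK.
rewrite sqnormD sqnormZ mxinnerZr H_expand mxinnerC.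
by field; rewrite gt_eqF.
Qed.

(* Proximal gradient descent on F = phi + H with step 1/L contracts the
   optimality gap at the linear rate 1 - muF/L: compare the step with the
   point t xs + (1 - t) x, t = muF/L, using strong convexity of F and the
   two quadratic bounds on H. *)
Lemma prox_grad_descent x xs p :
  minimizes (proxobj L^-1 phi (x - L^-1 *: G x)) p ->
  phi p + H p - (phi xs + H xs) <= (1 - muF / L) * (phi x + H x - (phi xs + H xs)).
Proof.
move=> pmin; set t := muF / L.
have t01 : 0 <= t <= 1.
  case/andP: muF_range => mu0 muL.
  by rewrite divr_ge0 ?ler_pdivrMr ?mul1r // ltW.
set z := t *: xs + (1 - t) *: x.
have zx : z - x = t *: (xs - x) by apply/matrixP => i j; rewrite !mxE; ring.
have := pmin z; rewrite !proxobj_model zx H_scale sqnormZ => zbound.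
have Fz : phi z + H z <= t * (phi xs + H xs) + (1 - t) * (phi x + H x)
                         - muF / 2 * t * (1 - t) * sqnorm (xs - x).
  exact: F_sc.
have Hp := H_upper (p - x); have Hs := H_lower (xs - x).
have rate : L / 2 * t ^+ 2 = muF / 2 * t by rewrite /t; field; rewrite gt_eqF.
have S0 := sqnorm_ge0 (xs - x).
have : t ^+ 2 * (muF / 2 * sqnorm (xs - x)) <= t ^+ 2 * H (xs - x).
  by rewrite ler_wpM2l // sqr_ge0.
nra.
Qed.

End QuadraticProxGradient.

Lemma linear_rate_complexity (R : realType) (e : nat -> R) (t eps : R) :
  0 < t <= 1 -> 0 < eps -> 0 <= e 0%N ->
  (forall j, e j.+1 <= (1 - t) * e j) ->
  forall k, ln (e 0%N / eps) <= k%:R * t -> e k <= eps.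
Proof.
move=> /andP[t0 t1] eps0 e0 contract k klarge.
have q0 : 0 <= 1 - t by rewrite subr_ge0.
have geom : e k <= (1 - t) ^+ k * e 0%N.
  elim: k {klarge} => [|j IH]; first by rewrite expr0 mul1r.
  by apply: le_trans (contract j) _; rewrite exprS -mulrA ler_wpM2l.
apply: le_trans geom _.
have [small|big] := leP (e 0%N) eps.
  apply: le_trans small.
  by rewrite ler_piMl ?exprn_ile1 ?exprn_ge0 // lerBlDr lerDl ltW.
have e0p : 0 < e 0%N by apply: lt_trans big.
have qk : (1 - t) ^+ k <= expR (- (k%:R * t)).
  rewrite -mulrN expRM_natl; apply: lerXn2r; rewrite ?nnegrE ?expR_ge0 //.
  by have := expR_ge1Dx (- t); rewrite addrC.
have : expR (- (k%:R * t)) <= expR (- ln (e 0%N / eps)) by rewrite ler_expR lerN2.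
rewrite [X in _ <= X]expRN lnK ?posrE ?divr_gt0 // invf_div => /(le_trans qk).
by rewrite ler_pdivlMr // mulrC.
Qed.

Section DecentralizedProblem.
Variables (R : realType) (n d : nat) (f : 'I_n -> 'rV[R]_d -> R) (mu lam : R).
Hypotheses (n_gt0 : (0 < n)%N) (mu_gt0 : 0 < mu) (lam_gt0 : 0 < lam).
Hypothesis f_sc : forall i, strongly_convex mu (f i).
Hypothesis f_diff : forall i z, differentiable (f i : 'rV[R]_d -> R^o) z.
Implicit Types x z w : 'M[R]_(n, d).

Let n_neq0 : n%:R != 0 :> R. Proof. by rewrite pnatr_eq0 -lt0n. Qed.
Let lam_neq0 : lam != 0. Proof. by rewrite gt_eqF. Qed.
Let lam_mu_neq0 : lam + mu != 0. Proof. by rewrite gt_eqF // addr_gt0. Qed.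
Let Lh_gt0 : 0 < Lh n mu lam.
Proof. by rewrite divr_gt0 ?addr_gt0 ?ltr0n. Qed.

Definition grad_h x : 'M[R]_(n, d) := (lam / n%:R) *: dev x + (mu / n%:R) *: x.

Lemma hfun_expand x w :
  hfun mu lam (x + w) = hfun mu lam x + mxinner (grad_h x) w + hfun mu lam w.
Proof. by rewrite /hfun psiD // sqnormD /grad_h mxinnerDl !mxinnerZl; field. Qed.

Lemma hfun_scale a w : hfun mu lam (a *: w) = a ^+ 2 * hfun mu lam w.
Proof. by rewrite /hfun psiZ sqnormZ; ring. Qed.

Lemma hfun_lower w : mu / n%:R / 2 * sqnorm w <= hfun mu lam w.
Proof.
have -> : mu / n%:R / 2 = mu / (2 * n%:R) by field.
by rewrite /hfun lerDr mulr_ge0 ?psi_ge0 // ltW.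
Qed.

Lemma hfun_upper w : hfun mu lam w <= Lh n mu lam / 2 * sqnorm w.
Proof.
have -> : Lh n mu lam / 2 * sqnorm w
    = lam * ((2 * n%:R)^-1 * sqnorm w) + mu / (2 * n%:R) * sqnorm w.
  by rewrite /Lh; field.
by rewrite lerD2r ler_wpM2l ?psi_le // ltW.
Qed.

Lemma fsum_strongly_convex : strongly_convex (mu / n%:R) (fsum f).
Proof.
move=> x y t t01.
have rhsE : t * fsum f x + (1 - t) * fsum f y
              - mu / n%:R / 2 * t * (1 - t) * sqnorm (x - y)
    = n%:R^-1 * \sum_i (t * f i (row i x) + (1 - t) * f i (row i y)
                        - mu / 2 * t * (1 - t) * sqnorm (row i x - row i y)).
  rewrite sqnorm_rows; under eq_bigr do rewrite linearB.
  by rewrite /fsum sumrB big_split /= -!mulr_sumr; field.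
rewrite rhsE /fsum ler_wpM2l ?invr_ge0 ?ler0n //; apply: ler_sum => i _.
by rewrite [in X in X <= _]linearD ![in X in X <= _]linearZ; exact: f_sc.
Qed.

Lemma phifun_add_hfun z : phifun f mu z + hfun mu lam z = Fobj f lam z.
Proof. by rewrite /phifun /hfun /Fobj; ring. Qed.

(* F = f + lam psi is (mu/n)-strongly convex, since psi is convex. *)
Lemma Fobj_strongly_convex :
  strongly_convex (mu / n%:R) (fun z => phifun f mu z + hfun mu lam z).
Proof.
move=> x y t t01; rewrite !phifun_add_hfun /Fobj psi_convex //.
have := fsum_strongly_convex x y t01; have := psi_ge0 (x - y).
have : 0 <= t * (1 - t) by case/andP: t01 => t0 t1; rewrite mulr_ge0 ?subr_ge0.
move=> t1t psi0 fsc.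
have : 0 <= lam * (t * (1 - t) * psi (x - y)).
  by apply: mulr_ge0; [exact: ltW | exact: mulr_ge0].
lra.
Qed.

Definition pg_input x : 'M[R]_(n, d) := x - (Lh n mu lam)^-1 *: grad_h x.
Definition pg_step x : 'M[R]_(n, d) := prox (Lh n mu lam)^-1 (phifun f mu) (pg_input x).

Lemma row_pg_input x i : row i (pg_input x) = (lam / (lam + mu)) *: xbar x.
Proof.
rewrite /pg_input /grad_h [LHS]linearB /= [in LHS]linearZ /= [in LHS]linearD /=.
rewrite ![in LHS]linearZ /= row_dev.
apply/matrixP => a j; rewrite !mxE /Lh.
by field; rewrite n_neq0 lam_mu_neq0.
Qed.

(* ... hence the proximal objective of the step separates over the agents:
   up to a positive factor and an additive constant it is
   sum_i  f_i(z_i) + lam/2 |z_i - xbar|^2. *)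
Lemma proxobj_step_separates x : exists c : R, forall z,
  proxobj (Lh n mu lam)^-1 (phifun f mu) (pg_input x) z
  = n%:R^-1 * rowsum (fun i u => proxobj lam^-1 (f i) (xbar x) u + c) z.
Proof.
exists (((lam + mu) / 2 * (lam / (lam + mu)) ^+ 2 - lam / 2) * sqnorm (xbar x)).
move=> z; rewrite /proxobj /phifun /fsum /rowsum (sqnorm_rows z) (sqnorm_rows (_ - _)).
under [X in _ + _ * X = _]eq_bigr => i _
  do rewrite linearB /= row_pg_input sqnormB sqnormZ mxinnerZr.
under [X in _ = _ * X]eq_bigr => i _ do rewrite sqnormB.
move: (sqnorm (xbar x)) => s.
rewrite !mulr_sumr -sumrN -!big_split /=; apply: eq_bigr => i _.
by rewrite /Lh; field; rewrite lam_mu_neq0 lam_neq0 n_neq0.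
Qed.

(* The proximal step has a minimizer: stack the agents' proximal points. *)
Lemma pg_step_minimizes x :
  minimizes (proxobj (Lh n mu lam)^-1 (phifun f mu) (pg_input x)) (pg_step x).
Proof.
have [c sepE] := proxobj_step_separates x; apply: prox_minimizes.
exists (\matrix_i prox lam^-1 (f i) (xbar x)) => z.
rewrite !sepE ler_wpM2l ?invr_ge0 ?ler0n //; apply: rows_min_rowsum => i u.
rewrite lerD2r; apply: (prox_minimizes_rV _ mu_gt0); rewrite ?invr_gt0 //.
by move=> y; exact: differentiable_continuous (f_diff i y).
Qed.

Lemma row_pg_step x i : row i (pg_step x) = prox lam^-1 (f i) (xbar x).
Proof.
have [c sepE] := proxobj_step_separates x.
pose G j u := proxobj lam^-1 (f j) (xbar x) u + c.
have summin : minimizes (rowsum G) (pg_step x).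
  by move=> z; have := pg_step_minimizes x z; rewrite !sepE ler_pM2l // invr_gt0 ltr0n.
have rowmin := rowsum_min_rows summin i.
symmetry; apply: (prox_eq mu_gt0 _ (f_sc i)); first by rewrite invr_gt0.
by move=> u; have := rowmin u; rewrite lerD2r.
Qed.

Lemma pg_step_descent x xs :
  Fobj f lam (pg_step x) - Fobj f lam xs
  <= (1 - mu / (lam + mu)) * (Fobj f lam x - Fobj f lam xs).
Proof.
have rate : mu / n%:R / Lh n mu lam = mu / (lam + mu).
  by rewrite /Lh; field; rewrite lam_mu_neq0 n_neq0.
have muF_range : 0 <= mu / n%:R <= Lh n mu lam.
  apply/andP; split; first by rewrite divr_ge0 ?ler0n // ltW.
  by rewrite /Lh ler_pM2r ?invr_gt0 ?ltr0n // lerDr ltW.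
have := prox_grad_descent hfun_expand hfun_scale Lh_gt0 muF_range hfun_lower
  hfun_upper Fobj_strongly_convex xs (pg_step_minimizes x).
by rewrite !phifun_add_hfun rate.
Qed.

End DecentralizedProblem.

(* The supplied gradient map is necessarily grad_h, so the abstract iteration
   is the explicit proximal gradient step. *)
Lemma pg_iterS (R : realType) n d (f : 'I_n -> 'rV[R]_d -> R) (mu lam : R)
    (gradh : 'M[R]_(n, d) -> 'M[R]_(n, d)) (x0 : 'M[R]_(n, d)) (k : nat) :
  standing_assumptions f mu lam gradh ->
  pg_iter f mu lam gradh x0 k.+1 = pg_step f mu lam (pg_iter f mu lam gradh x0 k).
Proof.
move=> [[n_gt0 _ _ _ _] is_grad] /=; set x := pg_iter _ _ _ _ _ k.
by rewrite (quadratic_gradient (hfun_expand mu lam n_gt0)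
  (@hfun_scale _ _ _ mu lam) (is_grad x)).
Qed.

Theorem mainTheorem3 (R : realType) :
  (forall (n d : nat) (f : 'I_n -> 'rV[R]_d -> R) (mu lam : R)
          (gradh : 'M[R]_(n, d) -> 'M[R]_(n, d)) (x0 : 'M[R]_(n, d)),
     standing_assumptions f mu lam gradh ->
     forall (k : nat) (i : 'I_n),
       row i (pg_iter f mu lam gradh x0 k.+1)
       = prox lam^-1 (f i) (xbar (pg_iter f mu lam gradh x0 k)))
  /\
  (exists c : R, 0 < c /\
   forall (n d : nat) (f : 'I_n -> 'rV[R]_d -> R) (mu lam : R)
          (gradh : 'M[R]_(n, d) -> 'M[R]_(n, d)) (x0 xstar : 'M[R]_(n, d))
          (eps : R),
     standing_assumptions f mu lam gradh ->
     (forall y, Fobj f lam xstar <= Fobj f lam y) ->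
     0 < eps ->
     forall k : nat,
       c * (1 + lam / mu) * ln ((Fobj f lam x0 - Fobj f lam xstar) / eps)
         <= k%:R ->
       Fobj f lam (pg_iter f mu lam gradh x0 k) - Fobj f lam xstar <= eps).
Proof.
split=> [n d f mu lam gradh x0 std k i|].
  have [[n_gt0 mu_gt0 lam_gt0 f_sc f_diff] _] := std.
  by rewrite pg_iterS // (row_pg_step n_gt0 mu_gt0 lam_gt0 f_sc f_diff).
(* The iteration count (1 + lam/mu) ln(gap_0/eps) suffices, i.e. c = 1. *)
exists 1; split=> // n d f mu lam gradh x0 xs eps std xs_min eps_gt0 k k_large.
have [[n_gt0 mu_gt0 lam_gt0 f_sc f_diff] _] := std.
pose gap j := Fobj f lam (pg_iter f mu lam gradh x0 j) - Fobj f lam xs.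
have lam_mu_gt0 : 0 < lam + mu by rewrite addr_gt0.
have rate01 : 0 < mu / (lam + mu) <= 1.
  by rewrite divr_gt0 //= ler_pdivrMr // mul1r lerDr ltW.
apply: (linear_rate_complexity (e := gap) rate01 eps_gt0).
- by rewrite subr_ge0 xs_min.
- move=> j; rewrite /gap pg_iterS //.
  exact: (pg_step_descent n_gt0 mu_gt0 lam_gt0 f_sc f_diff).
- have inv_rate : 1 * (1 + lam / mu) * (mu / (lam + mu)) = 1.
    by field; rewrite gt_eqF // gt_eqF.
  have := ler_wpM2r (ltW (proj1 (andP rate01))) k_large.
  by rewrite mulrAC inv_rate mul1r.
Qed.
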